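(* For all positive integers $N$ and $t$, letting $n=N(2t+2)$, there exist an unweighted directed graph $G=(V,E)$ with $n$ vertices and a subset $S\subseteq V$ with $|S|=N=\Theta(n/t)$ such that $\mathrm{outecc}_G(s)=t+1$ for every $s\in S$, and every subgraph $H=(V,E')$, $E'\subseteq E$, satisfying $\mathrm{outecc}_H(s)<2\,\mathrm{outecc}_G(s)$ for all $s\in S$ contains at least $N^2$ edges, i.e. $\Omega(n^2/t^2)$ edges.
   Context: $d_G(u,v)$ is the directed shortest-path distance and $\mathrm{outecc}_G(x)=\max_{y\in V}d_G(x,y)$. *)

From mathcomp Require Import all_boot.
Set Implicit Arguments. Unset Strict Implicit. Unset Printing Implicit Defensive.

(* A directed graph on a finite vertex type T is given by its edge set
   E : {set T * T}; (u, v) \in E is the arc u -> v. *)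

Fixpoint reach (T : finType) (E : {set T * T}) (k : nat) (u : T) : {set T} :=
  match k with
  | 0 => [set u]
  | k'.+1 => reach E k' u :|: [set y | [exists x in reach E k' u, (x, y) \in E]]
  end.

(* Directed shortest-path distance d_E(u,v): Some d if v is reachable from u
   (d = least k with v reachable within k steps; shortest paths have
   length < #|T|), None (= +infinity) otherwise. *)
Definition dist (T : finType) (E : {set T * T}) (u v : T) : option nat :=
  let k := find (fun k => v \in reach E k u) (iota 0 #|T|) in
  if k < #|T| then Some k else None.

Definition outecc (T : finType) (E : {set T * T}) (x : T) : option nat :=
  if [forall y, dist E x y != None]
  then Some (\max_(y : T) odflt 0 (dist E x y))
  else None.

Definition ltx (a b : option nat) : bool :=
  match a, b with
  | Some x, Some y => x < y
  | Some _, None => true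
  | None, _ => false
  end.

Definition dblx (a : option nat) : option nat := omap (fun x => 2 * x) a.

From mathcomp Require Import all_boot zify.
Set Implicit Arguments. Unset Strict Implicit. Unset Printing Implicit Defensive.

(* The vertices are split into N blocks of 2t+2 vertices each;
   the vertex (k, r) is number r of block k.  Every "source" (k, 0) has an arc
   to every (k', 1); inside block k there is a path (k,1) -> ... -> (k,t+1),
   a return arc (k,t) -> (k,0), and arcs (k,1) -> (k,r) for r >= t+2.
   From (i,0) every vertex is within distance t+1, and (k,t+1) is exactly at
   distance t+1, so outecc = t+1 on the N sources.  If a subgraph H misses
   the arc (i,0) -> (j,1), then from (i,0) the path of block j can only be
   entered through another source (k,0), which lies at distance t+1, so
   (j,t+1) is at distance >= 2t+2 = 2 outecc_G(i,0).  Hence H must keep all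
   N^2 arcs (i,0) -> (j,1).
   Both the exact distances and the lower bound are obtained from the same
   general principle, proved first: a 1-Lipschitz "potential" f along arcs
   with f s = 0 is a lower bound on the distance from s, and if moreover every
   v is reachable within f v steps, then f is the distance function. *)

Section Potentials.
Variables (T : finType) (E : {set T * T}).

Definition potential (f : T -> nat) : Prop :=
  forall x y, (x, y) \in E -> f y <= f x + 1.

Lemma reach0 (u : T) : u \in reach E 0 u.
Proof. by rewrite /= in_set1. Qed.

Lemma reach_step k (u x y : T) :
  x \in reach E k u -> (x, y) \in E -> y \in reach E k.+1 u.
Proof.
move=> hx hxy; rewrite /= in_setU inE; apply/orP; right.
by apply/existsP; exists x; rewrite hx hxy.
Qed.

Lemma potential_reach (f : T -> nat) (u : T) :
  potential f -> f u = 0 -> forall k v, v \in reach E k u -> f v <= k.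
Proof.
move=> hf hu; elim=> [|k IH] v /=; first by rewrite in_set1 => /eqP ->; rewrite hu.
rewrite in_setU inE => /orP [/IH|/existsP [x /andP [/IH hx /hf]]]; lia.
Qed.

Lemma dist_reach (u v : T) d : dist E u v = Some d -> v \in reach E d u.
Proof.
rewrite /dist; case: ifP => // hlt [<-].
have hfind : has (fun k => v \in reach E k u) (iota 0 #|T|).
  by rewrite has_find size_iota.
by have := nth_find 0 hfind; rewrite nth_iota.
Qed.

Lemma dist_least (u v : T) d :
  v \in reach E d u -> (forall k, v \in reach E k u -> d <= k) -> d < #|T| ->
  dist E u v = Some d.
Proof.
move=> hd hmin hlt; rewrite /dist.
set p := fun k => v \in reach E k u.
have hfind : has p (iota 0 #|T|) by apply/hasP; exists d; rewrite ?mem_iota.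
have hfound := nth_find 0 hfind; rewrite has_find size_iota in hfind.
rewrite nth_iota // in hfound.
have hle := hmin _ hfound.
case: (ltngtP d (find p (iota 0 #|T|))) => [hbefore||<-]; last by rewrite hlt.
- by have := before_find 0 hbefore; rewrite nth_iota //= /p hd.
- lia.
Qed.

Lemma outecc_potential (g : T -> nat) (s : T) :
  potential g -> g s = 0 -> (forall v, v \in reach E (g v) s) ->
  (forall v, g v < #|T|) -> outecc E s = Some (\max_v g v).
Proof.
move=> hg hs hreach hlt.
have hdist v : dist E s v = Some (g v).
  by apply: dist_least => // k; apply: potential_reach.
rewrite /outecc ifT; last by apply/forallP => v; rewrite hdist.
by congr Some; apply: eq_bigr => v _; rewrite hdist.
Qed.

Lemma potential_le_outecc (f : T -> nat) (s : T) m :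
  potential f -> f s = 0 -> outecc E s = Some m -> forall v, f v <= m.
Proof.
move=> hf hs; rewrite /outecc; case: ifP => // /forallP hall [<-] v.
have := hall v; case hd: (dist E s v) => [d|] // _.
have := potential_reach hf hs (dist_reach hd).
have := @leq_bigmax _ (fun y => odflt 0 (dist E s y)) v; rewrite hd /=; lia.
Qed.

End Potentials.

Definition arc (t kx rx ky ry : nat) : bool :=
  [|| (rx == 0) && (ry == 1),
      (kx == ky) && (1 <= rx) && (rx <= t) && (ry == rx.+1),
      (kx == ky) && (rx == t) && (ry == 0)
    | (kx == ky) && (rx == 1) && (t + 2 <= ry)].

(* Distance in G from the source of block i to position (k, r). *)
Definition gdist (t i k r : nat) : nat :=
  if r == 0 then (if k == i then 0 else t + 1) else if r <= t + 1 then r else 2.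

(* Lower bound on the distance from (i, 0) once the arc (i,0) -> (j,1) is
   removed: the path of block j is then entered only after t+1 steps. *)
Definition gcut (t i j k r : nat) : nat :=
  if r == 0 then (if k == i then 0 else t + 1)
  else if r <= t + 1 then (if k == j then r + t + 1 else r) else 0.

Lemma arc_irrefl t k r : 0 < t -> arc t k r k r = false.
Proof. rewrite /arc; lia. Qed.

Lemma gdist_arc t i kx rx ky ry : 0 < t -> arc t kx rx ky ry ->
  gdist t i ky ry <= gdist t i kx rx + 1.
Proof. rewrite /arc /gdist => *; do ?case: ifP => ?; lia. Qed.

Lemma gcut_arc t i j kx rx ky ry : 0 < t -> arc t kx rx ky ry ->
  ~~ [&& kx == i, rx == 0, ky == j & ry == 1] ->
  gcut t i j ky ry <= gcut t i j kx rx + 1.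
Proof. rewrite /arc /gcut => *; do ?case: ifP => ?; lia. Qed.

Section Construction.
Variables N t : nat.
Hypothesis hN : 0 < N.

Local Notation M := (2 * t + 2).
Local Notation V := 'I_(N * M).

Let M_gt0 : 0 < M. Proof. by rewrite addn2. Qed.
Let n_gt0 : 0 < N * M. Proof. by rewrite muln_gt0 hN. Qed.

Definition blk (v : V) : nat := val v %/ M.
Definition pos (v : V) : nat := val v %% M.
Definition mk (k r : nat) : V := insubd (Ordinal n_gt0) (k * M + r).

Lemma blk_lt v : blk v < N.
Proof. by rewrite /blk ltn_divLR // ltn_ord. Qed.

Lemma pos_lt v : pos v < M.
Proof. by rewrite /pos ltn_pmod. Qed.

Lemma val_mk k r : k < N -> r < M -> val (mk k r) = k * M + r.
Proof. by move=> hk hr; rewrite val_insubd ifT //; nia. Qed.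

Lemma blk_mk k r : k < N -> r < M -> blk (mk k r) = k.
Proof. by move=> hk hr; rewrite /blk val_mk // divnMDl // divn_small // addn0. Qed.

Lemma pos_mk k r : k < N -> r < M -> pos (mk k r) = r.
Proof. by move=> hk hr; rewrite /pos val_mk // modnMDl modn_small. Qed.

Lemma mk_blk_pos v : mk (blk v) (pos v) = v.
Proof. by apply: val_inj; rewrite val_mk ?blk_lt ?pos_lt // -divn_eq. Qed.

Lemma mk_ord_inj r : r < M -> injective (fun k : 'I_N => mk (val k) r).
Proof.
by move=> hr a b /(congr1 blk); rewrite !blk_mk ?ltn_ord // => /val_inj.
Qed.

Definition E : {set V * V} :=
  [set e | arc t (blk e.1) (pos e.1) (blk e.2) (pos e.2)].

Definition S : {set V} := [set mk (val k) 0 | k : 'I_N].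

Lemma mem_E_mk kx rx ky ry : kx < N -> rx < M -> ky < N -> ry < M ->
  ((mk kx rx, mk ky ry) \in E) = arc t kx rx ky ry.
Proof. by move=> *; rewrite inE /= !blk_mk // !pos_mk. Qed.

Hypothesis ht : 0 < t.

Lemma reach_path i k r : i < N -> k < N -> 1 <= r <= t + 1 ->
  mk k r \in reach E r (mk i 0).
Proof.
move=> hi hk; elim: r => [//|[|r] IH] hr.
  by apply: (reach_step (reach0 _ _)); rewrite mem_E_mk // /arc; lia.
apply: (reach_step (IH _)); first lia.
by rewrite mem_E_mk // /arc; lia.
Qed.

Lemma outecc_source i : i < N -> outecc E (mk i 0) = Some (t + 1).
Proof.
move=> hi; pose g v := gdist t i (blk v) (pos v).
have g_mk k r : k < N -> r < M -> g (mk k r) = gdist t i k r.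
  by move=> hk hr; rewrite /g blk_mk // pos_mk.
have g_le v : g v <= t + 1 by rewrite /g /gdist; do ?case: ifP => ?; lia.
have g_reach v : v \in reach E (g v) (mk i 0).
  rewrite -(mk_blk_pos v) g_mk ?blk_lt ?pos_lt // /gdist.
  have := blk_lt v; have := pos_lt v.
  move: (blk v) (pos v) => k [|r] hr hk /=.
    case: eqP => [->|_]; first exact: reach0.
    by rewrite addn1; apply: (reach_step (reach_path hi hk _)); rewrite ?mem_E_mk // /arc; lia.
  case: ifP => hr1; first by apply: reach_path => //; lia.
  by apply: (reach_step (reach_path hi hk _)); rewrite ?mem_E_mk // /arc; lia.
rewrite (@outecc_potential _ _ g).
- congr Some; apply/eqP; rewrite eqn_leq; apply/andP; split.
    by apply/bigmax_leqP => v _.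
  have := @leq_bigmax _ g (mk i (t + 1)); rewrite g_mk /gdist; do ?case: ifP => ?; lia.
- by move=> x y; rewrite inE; apply: gdist_arc.
- by rewrite g_mk // /gdist !eqxx.
- exact: g_reach.
- by move=> v; rewrite card_ord; have := g_le v; nia.
Qed.

Lemma outecc_cut i j (E' : {set V * V}) : i < N -> j < N ->
  E' \subset E -> (mk i 0, mk j 1) \notin E' ->
  ~~ ltx (outecc E' (mk i 0)) (Some (2 * (t + 1))).
Proof.
move=> hi hj hsub hcut; case hecc: (outecc E' (mk i 0)) => [m|] //=.
pose f v := gcut t i j (blk v) (pos v).
have f_pot : potential E' f.
  move=> x y hxy; have := subsetP hsub _ hxy; rewrite inE => hE.
  apply: gcut_arc => //; apply/and4P => -[/eqP hx0 /eqP hx1 /eqP hy0 /eqP hy1].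
  by move: hxy hcut; rewrite -(mk_blk_pos x) -(mk_blk_pos y) hx0 hx1 hy0 hy1 => ->.
have f_src : f (mk i 0) = 0 by rewrite /f blk_mk // pos_mk // /gcut !eqxx.
have := potential_le_outecc f_pot f_src hecc (mk j (t + 1)).
have hr : t + 1 < M by lia.
by rewrite /f blk_mk // pos_mk // /gcut eqxx; do ?case: ifP => ?; lia.
Qed.

End Construction.

Theorem theorem7p2 (N t : nat) (hN : 0 < N) (ht : 0 < t) :
  exists (E : {set 'I_(N * (2 * t + 2)) * 'I_(N * (2 * t + 2))})
         (S : {set 'I_(N * (2 * t + 2))}),
    (forall x, (x, x) \notin E) /\
    #|S| = N /\
    (forall s, s \in S -> outecc E s = Some (t + 1)) /\
    (forall E' : {set 'I_(N * (2 * t + 2)) * 'I_(N * (2 * t + 2))},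
        E' \subset E ->
        (forall s, s \in S -> ltx (outecc E' s) (dblx (outecc E s))) ->
        N ^ 2 <= #|E'|).
Proof.
have hpos0 : 0 < 2 * t + 2 by lia.
have hpos1 : 1 < 2 * t + 2 by lia.
exists (E N t), (S t hN); split; [|split; [|split]].
- by move=> x; rewrite inE arc_irrefl.
- by rewrite card_imset ?card_ord //; exact: mk_ord_inj.
- by move=> _ /imsetP [k _ ->]; exact: (outecc_source hN ht (ltn_ord k)).
move=> E' hsub hlt.
have keep (i j : 'I_N) : (mk t hN i 0, mk t hN j 1) \in E'.
  apply/negPn/negP => hcut.
  have hsrc : mk t hN i 0 \in S t hN by apply/imsetP; exists i.
  have := hlt _ hsrc.
  rewrite (outecc_source hN ht (ltn_ord i)) /= => hlt'.
  by have := outecc_cut ht (ltn_ord i) (ltn_ord j) hsub hcut; rewrite hlt'.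
have hsources : [set (mk t hN p.1 0, mk t hN p.2 1) | p : 'I_N * 'I_N] \subset E'.
  by apply/subsetP => _ /imsetP [[i j] _ ->]; apply: keep.
have := subset_leq_card hsources.
rewrite card_imset ?card_prod ?card_ord ?mulnn // => -[a b] [c d] /= [].
by move=> /(mk_ord_inj hpos0) -> /(mk_ord_inj hpos1) ->.
Qed.
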